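(* Let $k\geq 2$ be an integer and let $f\colon\mathbb{N}_0\to\{0,1\}$ be given by $f(n)=\lfloor\sqrt{n}\rfloor \bmod 2$. Then $f$ is not asymptotically $k$-automatic.
   Context: $\mathbb{N}_0=\{0,1,2,\dots\}$. A property holds for almost all $n\in\mathbb{N}_0$ if the set of $n$ where it fails has upper density $\limsup_{N\to\infty}|\cdot\cap\{0,\dots,N-1\}|/N$ equal to $0$. Sequences $f,g$ are asymptotically equal, $f\simeq g$, if $f(n)=g(n)$ for almost all $n$. The $k$-kernel of $f$ is $\mathcal{N}_k(f) = \{ n \mapsto f(k^\alpha n + r) : \alpha, r \in \mathbb{N}_0,\ r < k^\alpha\}$; $f$ is asymptotically $k$-automatic if $\mathcal{N}_k(f)/{\simeq}$ is finite. *)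

From Stdlib Require Import Reals Arith List.
From Coquelicot Require Import Coquelicot.
Open Scope R_scope.

Fixpoint count_below (P : nat -> bool) (N : nat) : nat :=
  match N with
  | O => O
  | S M => (count_below P M + (if P M then 1 else 0))%nat
  end.

Definition upper_density_zero (P : nat -> bool) : Prop :=
  LimSup_seq (fun N => INR (count_below P N) / INR N) = Finite 0.

Definition asym_eq (f g : nat -> nat) : Prop :=
  upper_density_zero (fun n => negb (Nat.eqb (f n) (g n))).

Definition kernel_elt (k : nat) (f : nat -> nat) (alpha r : nat) : nat -> nat :=
  fun n => f (k ^ alpha * n + r)%nat.

(* N_k(f)/≃ is finite: finitely many ≃-classes cover the k-kernel *)
Definition asymptotically_automatic (k : nat) (f : nat -> nat) : Prop :=
  exists reps : list (nat -> nat),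
    forall alpha r : nat, (r < k ^ alpha)%nat ->
      exists g, In g reps /\ asym_eq (kernel_elt k f alpha r) g.

(** Dilating by a perfect square rescales the square root: [sqrt (A^2 n)] is
    roughly [A sqrt n].  On the blocks [n = 4K^2 i^2 + t] with [4i < t <= 8i]
    one gets [sqrt (K^2 n) = 2K^2 i + 1] but [sqrt (A^2 n) = 2AKi] whenever
    [2A <= K], so the kernel elements [n |-> f (k^(2a) n)] disagree pairwise on
    a set of positive upper density.  Asymptotic equality is an equivalence
    relation, so these infinitely many kernel elements lie in pairwise distinct
    classes. *)

From Stdlib Require Import Reals Arith List.
From Coquelicot Require Import Coquelicot.
From Stdlib Require Import Lia Lra Permutation.

Lemma upper_density_zero_iff (P : nat -> bool) :
  upper_density_zero P <->
  forall eps : posreal, eventually (fun N => INR (count_below P N) / INR N < eps).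
Proof.
  unfold upper_density_zero; split.
  - intros Hzero eps.
    destruct (ex_LimSup_seq (fun N => INR (count_below P N) / INR N)) as [l Hl].
    pose proof (is_LimSup_seq_unique _ _ Hl) as Hlim.
    rewrite Hzero in Hlim; subst l.
    destruct (Hl eps) as [_ [N0 HN0]].
    exists N0; intros N HN.
    specialize (HN0 N HN); lra.
  - intros Hsmall.
    apply is_LimSup_seq_unique; intros eps.
    pose proof (cond_pos eps); split.
    + intros N0; exists (S N0); split; [lia|].
      assert (0 <= INR (count_below P (S N0)) / INR (S N0))
        by (apply Rdiv_le_0_compat; [apply pos_INR | apply lt_0_INR; lia]).
      lra.
    + destruct (Hsmall eps) as [N0 HN0].
      exists N0; intros N HN.
      specialize (HN0 N HN); lra.
Qed.

Lemma count_below_mono (P : nat -> bool) (N M : nat) :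
  (N <= M)%nat -> (count_below P N <= count_below P M)%nat.
Proof. induction 1; simpl; lia. Qed.

Lemma count_below_block (P : nat -> bool) (a b : nat) :
  (forall t, (a <= t < a + b)%nat -> P t = true) ->
  (count_below P a + b <= count_below P (a + b))%nat.
Proof.
  induction b as [|b IH]; intros Hblock.
  - rewrite !Nat.add_0_r; lia.
  - replace (a + S b)%nat with (S (a + b)) by lia; simpl.
    rewrite (Hblock (a + b)%nat) by lia.
    assert (count_below P a + b <= count_below P (a + b))%nat
      by (apply IH; intros t Ht; apply Hblock; lia).
    lia.
Qed.

Lemma count_below_le_add (P Q R : nat -> bool) (N : nat) :
  (forall n, R n = true -> P n = true \/ Q n = true) ->
  (count_below R N <= count_below P N + count_below Q N)%nat.
Proof.
  intros Hcover; induction N as [|N IH]; simpl; [lia|].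
  destruct (R N) eqn:HR; [|lia].
  destruct (Hcover N HR) as [-> | ->]; [destruct (Q N) | destruct (P N)]; lia.
Qed.

Lemma upper_density_zero_union (P Q R : nat -> bool) :
  (forall n, R n = true -> P n = true \/ Q n = true) ->
  upper_density_zero P -> upper_density_zero Q -> upper_density_zero R.
Proof.
  rewrite !upper_density_zero_iff.
  intros Hcover HP HQ eps.
  assert (Hhalf : 0 < eps / 2) by (destruct eps; simpl; lra).
  destruct (HP (mkposreal _ Hhalf)) as [NP HNP], (HQ (mkposreal _ Hhalf)) as [NQ HNQ].
  exists (NP + NQ)%nat; intros N HN.
  specialize (HNP N ltac:(lia)); specialize (HNQ N ltac:(lia)); simpl in *.
  assert (Hinv : 0 <= / INR N).
  { destruct N as [|N]; [simpl; rewrite Rinv_0; lra|].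
    apply Rlt_le, Rinv_0_lt_compat, lt_0_INR; lia. }
  assert (Hle : INR (count_below R N) <= INR (count_below P N) + INR (count_below Q N))
    by (rewrite <- plus_INR; apply le_INR, count_below_le_add, Hcover).
  apply (Rmult_le_compat_r _ _ _ Hinv) in Hle.
  unfold Rdiv in *; lra.
Qed.

Lemma asym_eq_sym (f g : nat -> nat) : asym_eq f g -> asym_eq g f.
Proof.
  intros Hfg; refine (upper_density_zero_union _ _ _ _ Hfg Hfg).
  intros n Hn; left; rewrite Nat.eqb_sym; exact Hn.
Qed.

Lemma asym_eq_trans (f g h : nat -> nat) :
  asym_eq f g -> asym_eq g h -> asym_eq f h.
Proof.
  intros Hfg Hgh; refine (upper_density_zero_union _ _ _ _ Hfg Hgh); intros n.
  destruct (Nat.eqb_spec (f n) (g n)), (Nat.eqb_spec (g n) (h n)),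
    (Nat.eqb_spec (f n) (h n)); simpl; auto; congruence.
Qed.

Lemma not_upper_density_zero (P : nat -> bool) (eps : posreal) :
  (forall N0, exists N, (N0 <= N)%nat /\ eps * INR N <= INR (count_below P N)) ->
  ~ upper_density_zero P.
Proof.
  intros Hdense Hzero.
  destruct (proj1 (upper_density_zero_iff P) Hzero eps) as [N0 Hsmall].
  destruct (Hdense (S N0)) as [N [HN Hcount]].
  specialize (Hsmall N ltac:(lia)).
  assert (HNpos : 0 < INR N) by (apply lt_0_INR; lia).
  apply (Rmult_lt_compat_r (INR N)) in Hsmall; [|lra].
  unfold Rdiv in Hsmall; rewrite Rmult_assoc, Rinv_l in Hsmall; lra.
Qed.

Local Open Scope nat_scope.

(* The [i]-th block [c i^2 + (4i, 8i]] lies below [c (i+1)^2] because [4 <= c]. *)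
Lemma count_below_quadratic_blocks (P : nat -> bool) (c : nat) :
  4 <= c ->
  (forall i t, 4 * i + 1 <= t <= 8 * i -> P (c * i * i + t) = true) ->
  forall i, 2 * i * (i - 1) <= count_below P (c * i * i).
Proof.
  intros Hc Hblocks i; induction i as [|i IH]; [simpl; lia|].
  assert (count_below P (c * i * i + (4 * i + 1)) + 4 * i
          <= count_below P (c * i * i + (4 * i + 1) + 4 * i)).
  { apply count_below_block; intros t Ht.
    replace t with (c * i * i + (t - c * i * i)) by lia.
    apply Hblocks; lia. }
  pose proof (count_below_mono P (c * i * i) (c * i * i + (4 * i + 1)) ltac:(lia)).
  pose proof (count_below_mono P (c * i * i + (4 * i + 1) + 4 * i) (c * S i * S i)
                ltac:(nia)).
  nia.
Qed.

Lemma quadratic_blocks_not_upper_density_zero (P : nat -> bool) (c : nat) :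
  4 <= c ->
  (forall i t, 4 * i + 1 <= t <= 8 * i -> P (c * i * i + t) = true) ->
  ~ upper_density_zero P.
Proof.
  intros Hc Hblocks.
  assert (Hinv : (0 < / INR c)%R) by (apply Rinv_0_lt_compat, lt_0_INR; lia).
  apply (not_upper_density_zero P (mkposreal _ Hinv)); simpl; intros N0.
  set (i := S (S N0)).
  pose proof (count_below_quadratic_blocks P c Hc Hblocks i) as Hcount.
  exists (c * i * i); split; [nia|].
  replace (/ INR c * INR (c * i * i))%R with (INR (i * i))
    by (rewrite !mult_INR; field; apply not_0_INR; lia).
  apply le_INR; unfold i in *; nia.
Qed.

Lemma sqrt_dilate_odd (K i t : nat) :
  1 <= K -> 4 * i + 1 <= t <= 8 * i ->
  Nat.sqrt (K * K * (4 * K * K * i * i + t)) = 2 * K * K * i + 1.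
Proof.
  intros HK Ht; apply Nat.sqrt_unique; split.
  - assert (K * K * t >= K * K * (4 * i + 1)) by (apply Nat.mul_le_mono_l; lia). nia.
  - assert (K * K * t <= K * K * (8 * i)) by (apply Nat.mul_le_mono_l; lia). nia.
Qed.

Lemma sqrt_dilate_even (A K i t : nat) :
  1 <= A -> 2 * A <= K -> t <= 8 * i ->
  Nat.sqrt (A * A * (4 * K * K * i * i + t)) = 2 * A * K * i.
Proof.
  intros HA HK Ht; apply Nat.sqrt_unique; split; [nia|].
  assert (A * A * t <= A * A * (8 * i)) by (apply Nat.mul_le_mono_l; lia).
  assert (A * (2 * A) * i <= A * K * i)
    by (apply Nat.mul_le_mono_r, Nat.mul_le_mono_l; lia).
  nia.
Qed.

Lemma kernel_sqrt_parity_not_asym_eq (k a b : nat) :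
  2 <= k -> a < b ->
  ~ asym_eq (kernel_elt k (fun n => Nat.sqrt n mod 2) (2 * a) 0)
            (kernel_elt k (fun n => Nat.sqrt n mod 2) (2 * b) 0).
Proof.
  intros Hk Hab.
  assert (HA : 1 <= k ^ a) by (apply Nat.neq_0_lt_0, Nat.pow_nonzero; lia).
  assert (HAK : 2 * k ^ a <= k ^ b).
  { assert (k ^ S a <= k ^ b) by (apply Nat.pow_le_mono_r; lia).
    simpl in *; nia. }
  apply (quadratic_blocks_not_upper_density_zero _ (4 * k ^ b * k ^ b)); [nia|].
  intros i t Ht; unfold kernel_elt.
  rewrite !(Nat.mul_comm 2), !Nat.pow_mul_r, !Nat.pow_2_r, !Nat.add_0_r.
  rewrite <- !Nat.mul_assoc with (n := 4).
  rewrite !Nat.mul_assoc, sqrt_dilate_even, sqrt_dilate_odd by lia.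
  rewrite <- !(Nat.mul_assoc 2).
  apply Bool.negb_true_iff, Nat.eqb_neq.
  rewrite Nat.add_comm, !(Nat.mul_comm 2), Nat.Div0.mod_mul, Nat.Div0.mod_add.
  discriminate.
Qed.

Lemma kernel_antichain_not_asymptotically_automatic
    (k : nat) (f : nat -> nat) (alpha : nat -> nat) :
  1 <= k ->
  (forall m m', m <> m' ->
     ~ asym_eq (kernel_elt k f (alpha m) 0) (kernel_elt k f (alpha m') 0)) ->
  ~ asymptotically_automatic k f.
Proof.
  intros Hk Hapart [reps Hreps].
  destruct (Permutation_pigeonhole_rel
              (fun m g => asym_eq (kernel_elt k f (alpha m) 0) g)
              (l1 := seq 0 (S (length reps))) (l2 := reps))
    as [m [m' [rest [Hperm [g [_ [Hm Hm']]]]]]].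
  - apply Forall_forall; intros m _.
    apply Exists_exists, Hreps, Nat.neq_0_lt_0, Nat.pow_nonzero; lia.
  - rewrite length_seq; lia.
  - assert (Hdistinct : m <> m').
    { pose proof (Permutation_NoDup Hperm (seq_NoDup _ _)) as Hnodup.
      inversion Hnodup as [|? ? Hnotin]; intros ->; apply Hnotin; left; reflexivity. }
    exact (Hapart m m' Hdistinct (asym_eq_trans _ _ _ Hm (asym_eq_sym _ _ Hm'))).
Qed.

Theorem proposition5p1 (k : nat) (hk : (2 <= k)%nat) :
  ~ asymptotically_automatic k (fun n => Nat.sqrt n mod 2)%nat.
Proof.
  apply (kernel_antichain_not_asymptotically_automatic k _ (fun m => 2 * m)); [lia|].
  intros a b Hab Heq.
  destruct (Nat.lt_gt_cases a b) as [[Hlt | Hlt] _]; [exact Hab | |].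
  - exact (kernel_sqrt_parity_not_asym_eq k a b hk Hlt Heq).
  - exact (kernel_sqrt_parity_not_asym_eq k b a hk Hlt (asym_eq_sym _ _ Heq)).
Qed.
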